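(* For every integer $N\ge 0$, let $T_{1\times 4}(8,N)$ be the number of tilings of an $8\times n$ rectangle, $n=N/2$, by $N$ tiles of size $1\times 4$ (and $0$ if $N$ is odd). Then, as formal power series, $\sum_{N\ge 0} T_{1\times 4}(8,N)\,z^N=p(z)/q(z)$ where \[ p(z)=(1-z^2)^3(1+z^2)^3(1+z^4)^3(1-z^4-z^6-z^8+z^{12}), \] \[ q(z)=1-z^2-z^4-9z^8+2z^{10}+8z^{12}+5z^{14}+16z^{16}-13z^{20}-6z^{22}-13z^{24}-2z^{26}+10z^{28}+6z^{30}+6z^{32}+z^{34}-5z^{36}-2z^{38}-z^{40}+z^{44}. \]
   Context: A tiling of an $m\times n$ rectangle (width $m$, length $n$, made of $mn$ unit squares) by $a\times b$ tiles is a partition of the rectangle into non-overlapping axis-parallel $a\times b$ rectangles with integer corner coordinates, each placed in either of its two orientations. Tilings related by reflections or rotations of the rectangle are counted as distinct. The empty tiling counts once for $N=0$. *)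

From HB Require Import structures.
From mathcomp Require Import all_boot all_order all_algebra.
Unset Strict Implicit. Unset Printing Implicit Defensive.
Import Order.TTheory GRing.Theory Num.Theory.

(* Cells of the m x n rectangle (width m, length n): unit squares
   [i,i+1] x [j,j+1] indexed by (i,j) with i < m, j < n. *)
Definition cell (m n : nat) := ('I_m * 'I_n)%type.

Definition rect_cells (m n x y w h : nat) : {set cell m n} :=
  [set c : cell m n | (x <= c.1 < x + w) && (y <= c.2 < y + h)].

Definition is_tile (m n a b : nat) (B : {set cell m n}) : bool :=
  [exists x : 'I_m.+1, exists y : 'I_n.+1, exists o : bool,
     let w := if o then a else b in
     let h := if o then b else a in
     [&& x + w <= m, y + h <= n & B == rect_cells m n x y w h]].

Definition is_tiling (m n a b : nat) (P : {set {set cell m n}}) : bool :=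
  partition P [set: cell m n] && [forall B in P, is_tile m n a b B].

Definition tilings (m n a b : nat) : {set {set {set cell m n}}} :=
  [set P | is_tiling m n a b P].

Definition num_tilings (m n a b : nat) : nat := #|tilings m n a b|.

Definition T14_8 (N : nat) : nat :=
  if odd N then 0 else num_tilings 8 N./2 1 4.

Local Open Scope ring_scope.

Definition p_poly : {poly int} :=
  (1 - 'X^2) ^+ 3 * (1 + 'X^2) ^+ 3 * (1 + 'X^4) ^+ 3 *
  (1 - 'X^4 - 'X^6 - 'X^8 + 'X^12).

Definition q_poly : {poly int} :=
  1 - 'X^2 - 'X^4 - 9%:R *: 'X^8 + 2%:R *: 'X^10 + 8%:R *: 'X^12
  + 5%:R *: 'X^14 + 16%:R *: 'X^16 - 13%:R *: 'X^20 - 6%:R *: 'X^22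
  - 13%:R *: 'X^24 - 2%:R *: 'X^26 + 10%:R *: 'X^28 + 6%:R *: 'X^30
  + 6%:R *: 'X^32 + 'X^34 - 5%:R *: 'X^36 - 2%:R *: 'X^38 - 'X^40 + 'X^44.

From HB Require Import structures.
From mathcomp Require Import all_boot all_order all_algebra.
From mathcomp Require Import zify ring.
Import Order.TTheory GRing.Theory Num.Theory.

Set Implicit Arguments.
Unset Strict Implicit.
Unset Printing Implicit Defensive.

(* Tile the 8 x n board column by column.  Once the first columns are tiled, the
   uncovered region is a staircase, described by the profile d giving how many
   cells of each of the 8 rows are already covered from the current column on.
   Covering the first free cell of the current column by a tile lying along or
   across the board yields a recursion for the number of tilings with k columns
   left.  The identity q(z) F(z) = p(z) for the generating function in z^2 is
   certified by carrying the sum over j <= t of q_j A(m + t - j) as a formal integer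
   combination of profiles: after 22 steps all its coefficients cancel, which gives
   the recurrence for large indices, and the remaining ones are checked by
   evaluation. *)

Section TilingsOf.
Variables (T : finType) (tile : {set T} -> bool).

Definition tilings_of (S : {set T}) : {set {set {set T}}} :=
  [set P | partition P S && [forall B in P, tile B]].

Lemma card_tilings_of0 : #|tilings_of set0| = 1.
Proof.
have -> : tilings_of set0 = [set set0].
  apply/setP=> P; rewrite !inE partition_set0.
  case: eqP => [->|] //=; by apply/forallP => B; rewrite inE.
exact: cards1.
Qed.

Lemma tilings_ofD1 (S : {set T}) (P : {set {set T}}) (B : {set T}) :
  P \in tilings_of S -> B \in P ->
  P :\ B \in tilings_of (S :\: B).
Proof.
rewrite !inE => /andP[pP /forallP tP] BP; rewrite partitionD1 //=.
by apply/forallP=> B'; rewrite inE; apply/implyP=> /andP[_ /(implyP (tP B'))].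
Qed.

Lemma tilings_ofU1 (S : {set T}) (P : {set {set T}}) (B : {set T}) :
  tile B -> B != set0 -> B \subset S ->
  P \in tilings_of (S :\: B) -> B |: P \in tilings_of S.
Proof.
move=> tB B0 BS; rewrite !inE => /andP[pP /forallP tP].
have dB : [disjoint B & S :\: B].
  by rewrite disjoints_subset; apply/subsetP=> x xB; rewrite !inE xB.
have eS : B :|: (S :\: B) = S.
  by apply/setP=> x; rewrite !inE; case: (boolP (x \in B)) => [/(subsetP BS)->|].
have pU := partitionU1 pP B0 dB; rewrite eS in pU.
rewrite pU /=; apply/forallP=> B'; rewrite !inE.
by apply/implyP=> /orP[/eqP->//|]; apply: (implyP (tP B')).
Qed.

Lemma card_tilings_of_cell (S : {set T}) (c : T) : c \in S ->
  #|tilings_of S| =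
  \sum_(B | tile B && (c \in B) && (B \subset S)) #|tilings_of (S :\: B)|.
Proof.
move=> cS.
rewrite -sum1_card (partition_big (fun P => pblock P c)
   (fun B => tile B && (c \in B) && (B \subset S))); last first.
  move=> P; rewrite inE => /andP[pP /forallP tP].
  have cP : c \in cover P by rewrite (cover_partition pP).
  have BP := pblock_mem cP.
  by rewrite mem_pblock cP (partitionS pP BP) andbT (implyP (tP _) BP).
apply: eq_bigr => B /andP[/andP[tB cB] BS]; rewrite sum1_card.
have B0 : B != set0 by apply/set0Pn; exists c.
have BnotinP P' : P' \in tilings_of (S :\: B) -> B \notin P'.
  rewrite inE => /andP[pP' _]; apply/negP => BP'.
  by move: (subsetP (partitionS pP' BP') c cB); rewrite inE cB.
rewrite -(card_in_imset (f := fun P' => B |: P') (D := tilings_of (S :\: B))); last first.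
  by move=> P1 P2 /BnotinP P1B /BnotinP P2B /= e; rewrite -(setU1K P1B) e setU1K.
apply: eq_card => P; rewrite unfold_in /=; apply/idP/imsetP.
- case/andP=> tilP /eqP pb; have BP : B \in P.
    by move: tilP; rewrite inE -pb => /andP[pP _]; rewrite pblock_mem ?(cover_partition pP).
  by exists (P :\ B); rewrite ?tilings_ofD1 ?setD1K.
- case=> P' tilP' ->; have tilBP' := tilings_ofU1 tB B0 BS tilP'.
  rewrite tilBP' /=; move: tilBP'; rewrite inE => /andP[pU _].
  by apply/eqP; apply: def_pblock (partition_trivIset pU) _ cB; rewrite !inE eqxx.
Qed.

End TilingsOf.

Lemma tilingsE m n a b :
  tilings m n a b = tilings_of (is_tile m n a b) [set: cell m n].
Proof. by []. Qed.

Lemma in_rect_cells m n x y w h (c : cell m n) :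
  (c \in rect_cells m n x y w h) = (x <= c.1 < x + w) && (y <= c.2 < y + h).
Proof. by rewrite inE. Qed.

Lemma is_tileP m n a b (B : {set cell m n}) :
  reflect (exists x y w h, [/\ (w, h) = (a, b) \/ (w, h) = (b, a),
                              x + w <= m, y + h <= n & B = rect_cells m n x y w h])
          (is_tile m n a b B).
Proof.
apply: (iffP idP).
  case/existsP=> x /existsP[y /existsP[o /and3P[hx hy /eqP->]]].
  exists x, y, (if o then a else b), (if o then b else a).
  by split=> //; case: o {hx hy}; [left|right].
case=> x [y [w [h [wh hx hy ->]]]].
have x_lt : x < m.+1 by lia.
have y_lt : y < n.+1 by lia.
apply/existsP; exists (Ordinal x_lt); apply/existsP; exists (Ordinal y_lt).
apply/existsP; case: wh hx hy => -[-> ->] hx hy; [exists true | exists false];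
  by rewrite /= hx hy eqxx.
Qed.

(* Rows past the end of the profile count as occupied, hence the default 1. *)
Definition across_fits (d : seq nat) (i : nat) : bool :=
  [&& nth 1 d i.+1 == 0, nth 1 d i.+2 == 0 & nth 1 d i.+3 == 0].

Definition across_place (d : seq nat) (i : nat) : seq nat :=
  set_nth 0 (set_nth 0 (set_nth 0 (set_nth 0 d i 1) i.+1 1) i.+2 1) i.+3 1.

Lemma across_fits_size d i : across_fits d i -> i.+3 < size d.
Proof.
case/and3P=> _ _; case: (ltnP i.+3 (size d)) => // le_d.
by rewrite nth_default.
Qed.

Lemma size_across_place d i : i.+3 < size d -> size (across_place d i) = size d.
Proof. by move=> lt_d; rewrite !size_set_nth; lia. Qed.

Section Staircase.
Variable n : nat.

Definition staircase (j0 : nat) (d : seq nat) : {set cell 8 n} :=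
  [set c : cell 8 n | j0 + nth 0 d c.1 <= c.2].

Lemma in_staircase j0 d (c : cell 8 n) :
  (c \in staircase j0 d) = (j0 + nth 0 d c.1 <= c.2).
Proof. by rewrite inE. Qed.

Lemma staircase_flat : staircase 0 (nseq 8 0) = [set: cell 8 n].
Proof. by apply/setP=> c; rewrite in_staircase nth_nseq inE; case: ifP. Qed.

Lemma staircase_end j0 d : n <= j0 -> staircase j0 d = set0.
Proof.
move=> le_n; apply/setP=> -[i j]; rewrite in_staircase inE /=.
by have := ltn_ord j; apply/contraTF; lia.
Qed.

Lemma staircase_next_col j0 d : size d = 8 -> 0 \notin d ->
  staircase j0 d = staircase j0.+1 (map predn d).
Proof.
move=> size_d d_full; apply/setP=> c.
rewrite !in_staircase (nth_map 0) ?size_d //.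
have : nth 0 d c.1 != 0.
  by apply: contraNneq d_full => <-; rewrite mem_nth ?size_d.
by case: (nth 0 d c.1) => // m _; apply/idP/idP; lia.
Qed.

Lemma staircaseD_along j0 d i : nth 0 d i = 0 ->
  staircase j0 d :\: rect_cells 8 n i j0 1 4 = staircase j0 (set_nth 0 d i 4).
Proof.
move=> di0; apply/setP=> -[i' j]; rewrite inE !in_staircase in_rect_cells nth_set_nth /=.
by case: eqP => [->|?]; rewrite ?di0; apply/idP/idP; lia.
Qed.

Lemma staircaseD_across j0 d i : nth 0 d i = 0 -> across_fits d i ->
  staircase j0 d :\: rect_cells 8 n i j0 4 1 = staircase j0 (across_place d i).
Proof.
move=> di0 fits; have lt_d := across_fits_size fits.
move: fits => /and3P[/eqP d1 /eqP d2 /eqP d3].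
rewrite !(set_nth_default 0) in d1 d2 d3; try lia.
apply/setP=> -[i' j]; rewrite inE !in_staircase in_rect_cells /across_place /=.
do 4 rewrite nth_set_nth /=.
case: (nat_of_ord i' =P i.+3) => [->|?] /=; first by apply/idP/idP; lia.
case: (nat_of_ord i' =P i.+2) => [->|?] /=; first by apply/idP/idP; lia.
case: (nat_of_ord i' =P i.+1) => [->|?] /=; first by apply/idP/idP; lia.
by case: (nat_of_ord i' =P i) => [->|?] /=; rewrite ?di0; apply/idP/idP; lia.
Qed.

Section FirstGap.
Variables (j0 k : nat) (d : seq nat) (c : cell 8 n).
Hypotheses (cols_left : j0 + k = n) (size_d : size d = 8).
Hypotheses (c_row : c.1 = index 0 d :> nat) (c_col : c.2 = j0 :> nat).

Local Notation i0 := (index 0 d).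

Let gap_in_d : 0 \in d.
Proof. by rewrite -index_mem size_d -c_row ltn_ord. Qed.

Let nth_gap : nth 0 d i0 = 0.
Proof. exact: nth_index. Qed.

Let nth_before_gap i : i < i0 -> nth 0 d i != 0.
Proof. by move/(before_find 0) => /= ->. Qed.

Let nth1 i : i < 8 -> nth 1 d i = nth 0 d i.
Proof. by move=> lt_i; apply: set_nth_default; rewrite size_d. Qed.

Lemma gap_tile_shape B : is_tile 8 n 1 4 B -> c \in B -> B \subset staircase j0 d ->
  (4 <= k) && (B == rect_cells 8 n i0 j0 1 4) ||
  across_fits d i0 && (B == rect_cells 8 n i0 j0 4 1).
Proof.
move=> /is_tileP[x [y [w [h [wh x_le y_le ->]]]]].
rewrite in_rect_cells c_row c_col => /andP[x_c y_c] B_sub.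
have cell_in t u : x <= t < x + w -> y <= u < y + h -> j0 + nth 0 d t <= u.
  move=> t_in u_in; have lt_t : t < 8 by lia.
  have lt_u : u < n by lia.
  have := subsetP B_sub (Ordinal lt_t, Ordinal lt_u).
  by rewrite in_rect_cells in_staircase /=; apply; rewrite t_in.
have ey : y = j0 by have := cell_in x y; lia.
have ex : x = i0.
  have dx : nth 0 d x = 0 by have := cell_in x y; lia.
  case: (ltngtP x i0) => // [lt_x | gt_x]; last lia.
  by move: (nth_before_gap lt_x); rewrite dx.
case: wh => -[ew eh]; subst w h; rewrite ex ey eqxx.
  by apply/orP; left; rewrite andbT; lia.
apply/orP; right; rewrite andbT.
have d_gap t : t < 4 -> nth 1 d (i0 + t) == 0.
  by move=> lt_t; rewrite nth1; [have := cell_in (i0 + t) j0; lia | lia].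
by rewrite /across_fits -[i0.+3]addn3 -[i0.+2]addn2 -[i0.+1]addn1 !d_gap.
Qed.

Lemma tiles_at_gap B :
  is_tile 8 n 1 4 B && (c \in B) && (B \subset staircase j0 d) =
  (4 <= k) && (B == rect_cells 8 n i0 j0 1 4) ||
  across_fits d i0 && (B == rect_cells 8 n i0 j0 4 1).
Proof.
have lt_i0 : i0 < 8 by rewrite -c_row ltn_ord.
have lt_j0 : j0 < n by rewrite -c_col ltn_ord.
apply/idP/idP=> [/andP[/andP[]]|]; first exact: gap_tile_shape.
case/orP=> /andP[fits /eqP->]; rewrite in_rect_cells c_row c_col.
- apply/andP; split; first (apply/and4P; split; try lia).
    by apply/is_tileP; exists i0, j0, 1, 4; split=> //; [left | lia | lia].
  apply/subsetP=> -[i j]; rewrite in_rect_cells in_staircase /= => ij_in.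
  have -> : nat_of_ord i = i0 by lia.
  by rewrite nth_gap; lia.
- have lt_d := across_fits_size fits.
  move: fits => /and3P[/eqP d1 /eqP d2 /eqP d3].
  rewrite !nth1 in d1 d2 d3; try lia.
  apply/andP; split; first (apply/and4P; split; try lia).
    by apply/is_tileP; exists i0, j0, 4, 1; split=> //; [right | lia | lia].
  apply/subsetP=> -[i j]; rewrite in_rect_cells in_staircase /= => ij_in.
  have : nth 0 d i = 0.
    have : nat_of_ord i = i0 \/ nat_of_ord i = i0.+1 \/
           nat_of_ord i = i0.+2 \/ nat_of_ord i = i0.+3 by lia.
    by case=> [|[|[|]]] ->.
  lia.
Qed.

End FirstGap.
End Staircase.

(* The profiles of the next column, one for each way of completing the current
   column by repeatedly covering its first free cell; [along] says whether
   tiles along the length still fit, and [fuel] bounds the number of free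
   cells. *)
Fixpoint fill_column (along : bool) (fuel : nat) (d : seq nat) : seq (seq nat) :=
  if fuel is f.+1 then
    if 0 \in d then
      (if along then fill_column along f (set_nth 0 d (index 0 d) 4) else [::]) ++
      (if across_fits d (index 0 d)
       then fill_column along f (across_place d (index 0 d)) else [::])
    else [:: map predn d]
  else [:: map predn d].

Fixpoint profile_count (k : nat) (d : seq nat) : nat :=
  if k is k'.+1 then sumn [seq profile_count k' d' | d' <- fill_column (4 <= k) 8 d]
  else 1.

Lemma size_fill_column along fuel d d' :
  d' \in fill_column along fuel d -> size d' = size d.
Proof.
elim: fuel d => [|f IH] d /=; first by rewrite inE => /eqP->; rewrite size_map.
case: ifP => gap; last by rewrite inE => /eqP->; rewrite size_map.
have lt_gap : index 0 d < size d by rewrite index_mem.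
rewrite mem_cat => /orP[].
  by case: ifP => // _ /IH->; rewrite size_set_nth; lia.
by case: ifP => // /across_fits_size fits /IH->; rewrite size_across_place.
Qed.

Lemma count_set_nth (T : Type) (x0 : T) (a : pred T) s i y : i < size s ->
  count a (set_nth x0 s i y) + a (nth x0 s i) = count a s + a y.
Proof. by elim: s i => [|x s IH] [|i] //= lt_i; [lia | rewrite -addnA IH //; lia]. Qed.

Lemma count0_set_nth (s : seq nat) i y : i < size s -> 0 < y ->
  count_mem 0 (set_nth 0 s i y) + (nth 0 s i == 0) = count_mem 0 s.
Proof.
move=> lt_i y_gt0; have := count_set_nth 0 (pred1 0) y lt_i.
by rewrite /= (gtn_eqF y_gt0) addn0.
Qed.

Lemma count0_across_place d i : i.+3 < size d -> nth 0 d i = 0 ->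
  count_mem 0 (across_place d i) < count_mem 0 d.
Proof.
move=> lt_d di0; rewrite /across_place.
have := @count0_set_nth d i 1; rewrite di0 => /(_ ltac:(lia) isT) e0.
have := @count0_set_nth (set_nth 0 d i 1) i.+1 1.
rewrite size_set_nth => /(_ ltac:(lia) isT) e1.
have := @count0_set_nth (set_nth 0 (set_nth 0 d i 1) i.+1 1) i.+2 1.
rewrite !size_set_nth => /(_ ltac:(lia) isT) e2.
have := @count0_set_nth (set_nth 0 (set_nth 0 (set_nth 0 d i 1) i.+1 1) i.+2 1) i.+3 1.
rewrite !size_set_nth => /(_ ltac:(lia) isT) e3.
lia.
Qed.

Lemma sum_pred1_or (I : finType) (a b : I) (p q : bool) (F : I -> nat) :
  (p -> q -> a != b) ->
  \sum_(B | (p && (B == a)) || (q && (B == b))) F B =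
  (if p then F a else 0) + (if q then F b else 0).
Proof.
case: p; case: q => /= neq_ab.
- rewrite (bigD1 a) /=; last by rewrite eqxx.
  rewrite (eq_bigl (pred1 b)) ?big_pred1_eq // => B /=.
  by case: (B =P a) => [->|] /=; [rewrite (negbTE (neq_ab isT isT)) | rewrite andbT].
- by rewrite (eq_bigl (pred1 a)) ?big_pred1_eq ?addn0 // => B /=; rewrite orbF.
- by rewrite (eq_bigl (pred1 b)) ?big_pred1_eq.
- by rewrite big_pred0.
Qed.

Section ColumnRecursion.
Variable n : nat.
Local Notation tilings_st j0 d :=
  (tilings_of (is_tile 8 n 1 4) (staircase n j0 d)).

Lemma card_tilings_column j0 k fuel (d : seq nat) :
  j0 + k.+1 = n -> size d = 8 -> count_mem 0 d <= fuel ->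
  #|tilings_st j0 d| =
  sumn [seq #|tilings_st j0.+1 d'| | d' <- fill_column (4 <= k.+1) fuel d].
Proof.
move=> cols_left; elim: fuel d => [|f IH] d size_d fuel_d /=.
  have d_full : 0 \notin d by rewrite -has_pred1 has_count; lia.
  by rewrite staircase_next_col // addn0.
case: ifP => gap; last by rewrite staircase_next_col ?gap //= addn0.
have lt_j0 : j0 < n by lia.
have lt_i0 : index 0 d < 8 by rewrite -size_d index_mem.
have d_i0 : nth 0 d (index 0 d) = 0 by rewrite nth_index.
set c : cell 8 n := (Ordinal lt_i0, Ordinal lt_j0).
rewrite (card_tilings_of_cell _ (c := c)); last by rewrite in_staircase /= d_i0 addn0.
rewrite (eq_bigl _ _ (tiles_at_gap cols_left size_d (c := c) erefl erefl)).
rewrite sum_pred1_or; last first.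
  move=> _ /across_fits_size lt_d; apply/eqP=> e.
  have lt_i1 : (index 0 d).+1 < 8 by lia.
  by move/setP: e => /(_ (Ordinal lt_i1, Ordinal lt_j0)); rewrite !in_rect_cells /=; lia.
rewrite map_cat sumn_cat; congr (_ + _).
  case: ifP => // k_ge; rewrite staircaseD_along // IH ?k_ge //.
    by rewrite size_set_nth; lia.
  by have := @count0_set_nth d (index 0 d) 4 ltac:(lia) isT; rewrite d_i0; lia.
case: ifP => // fits; have lt_d := across_fits_size fits.
rewrite staircaseD_across // IH ?size_across_place //.
by have := count0_across_place lt_d d_i0; lia.
Qed.

Lemma card_tilings_staircase k j0 (d : seq nat) : j0 + k = n -> size d = 8 ->
  #|tilings_st j0 d| = profile_count k d.
Proof.
elim: k j0 d => [|k IH] j0 d cols_left size_d.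
  by rewrite staircase_end ?card_tilings_of0 //; lia.
rewrite (@card_tilings_column j0 k 8) //; last by rewrite -size_d count_size.
transitivity (sumn [seq profile_count k d' | d' <- fill_column (4 <= k.+1) 8 d]) => //.
congr sumn; apply/eq_in_map=> d' /size_fill_column size_d'.
by apply: IH; [lia | rewrite size_d'].
Qed.

End ColumnRecursion.

Definition rect_tilings (m : nat) : nat := profile_count m (nseq 8 0).

Lemma num_tilings_8_1_4 n : num_tilings 8 n 1 4 = rect_tilings n.
Proof. by rewrite /num_tilings tilingsE -staircase_flat (@card_tilings_staircase n n 0). Qed.

Local Open Scope ring_scope.

Definition comb_value (y : seq (seq nat * int)) (k : nat) : int :=
  foldr (fun p acc => p.2 * (profile_count k p.1)%:Z + acc) 0 y.

Definition comb_step (y : seq (seq nat * int)) : seq (seq nat * int) :=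
  flatten [seq [seq (d', p.2) | d' <- fill_column true 8 p.1] | p <- y].

(* Merging equal profiles is what lets the combination cancel. *)
Definition comb_merge (y : seq (seq nat * int)) : seq (seq nat * int) :=
  [seq (s, foldr +%R 0 [seq p.2 | p <- y & p.1 == s]) | s <- undup (map fst y)].

Definition comb_zero (y : seq (seq nat * int)) : bool := all (fun p => p.2 == 0) y.

Lemma comb_valueE y k : comb_value y k = \sum_(p <- y) p.2 * (profile_count k p.1)%:Z.
Proof. by elim: y => [|p y IH]; rewrite ?big_nil ?big_cons //= IH. Qed.

Lemma comb_value_cat y1 y2 k : comb_value (y1 ++ y2) k = comb_value y1 k + comb_value y2 k.
Proof. by rewrite !comb_valueE big_cat. Qed.

Lemma comb_value_step y k : (3 <= k)%N -> comb_value (comb_step y) k = comb_value y k.+1.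
Proof.
move=> k_ge; rewrite !comb_valueE /comb_step big_flatten big_map.
apply: eq_bigr => p _; rewrite big_map.
have -> : profile_count k.+1 p.1 =
  sumn [seq profile_count k d' | d' <- fill_column (4 <= k.+1)%N 8 p.1] by [].
have -> : (4 <= k.+1)%N = true by lia.
elim: (fill_column true 8 p.1) => [|d l IH]; first by rewrite big_nil mulr0.
by rewrite big_cons /= PoszD mulrDr IH.
Qed.

Lemma comb_value_merge y k : comb_value (comb_merge y) k = comb_value y k.
Proof.
rewrite !comb_valueE /comb_merge big_map /=.
set U := undup _.
have inU p : p \in y -> p.1 \in U by move=> py; rewrite mem_undup map_f.
transitivity (\sum_(s <- U) \sum_(p <- y) if p.1 == s then p.2 * (profile_count k p.1)%:Z else 0).
  apply: eq_bigr => s _.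
  have -> l : foldr +%R 0 l = \sum_(x <- l) x :> int.
    by elim: l => [|x l IH]; rewrite ?big_nil ?big_cons //= IH.
  rewrite big_map big_filter mulr_suml -big_mkcond.
  by apply: eq_bigr => p /eqP->.
rewrite exchange_big; apply: eq_big_seq => p py.
rewrite (big_rem p.1) ?inU //= eqxx big1_seq ?addr0 // => s /andP[_ sU].
by case: eqP => // ps; move: sU; rewrite -ps mem_rem_uniq ?undup_uniq // inE eqxx.
Qed.

Lemma comb_value_zero y k : comb_zero y -> comb_value y k = 0.
Proof.
move=> /allP y0; rewrite comb_valueE big1_seq // => p /andP[_ py].
by rewrite (eqP (y0 p py)) mul0r.
Qed.

Lemma comb_zero_step y : comb_zero y -> comb_zero (comb_step y).
Proof.
move=> /allP y0; apply/allP => _ /allpairsPdep[q [d [qy _ ->]]].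
exact: y0 qy.
Qed.

Lemma comb_zero_merge y : comb_zero y -> comb_zero (comb_merge y).
Proof.
move=> /allP y0; apply/allP => p /mapP[s _ ->] /=.
have : comb_zero [seq p <- y | p.1 == s].
  by apply/allP => q; rewrite mem_filter => /andP[_ /y0].
by elim: [seq _ <- _ | _] => //= q l IH /andP[/eqP-> /IH/eqP->]; rewrite addr0.
Qed.

Definition q_half : seq int :=
  [:: 1; -1; -1; 0; -9; 2; 8; 5; 16; 0; -13; -6; -13; -2; 10; 6; 6; 1; -5; -2; -1; 0; 1].
Definition p_half : seq int :=
  [:: 1; 0; -1; -1; -4; 0; 4; 3; 6; 0; -6; -3; -4; 0; 4; 1; 1; 0; -1].

Fixpoint qcomb (t : nat) : seq (seq nat * int) :=
  if t is t'.+1 then comb_merge (comb_step (qcomb t') ++ [:: (nseq 8 0, q_half`_t)])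
  else [:: (nseq 8 0, q_half`_0)].

Lemma comb_value_qcomb t m : (3 <= m)%N ->
  comb_value (qcomb t) m = \sum_(j < t.+1) q_half`_j * (rect_tilings (m + t - j))%:Z.
Proof.
elim: t m => [|t IH] m m_ge.
  by rewrite big_ord1 /= addr0 addn0 subn0.
rewrite /= comb_value_merge comb_value_cat comb_value_step // IH; last by lia.
rewrite [RHS]big_ord_recr /= addr0 addnK; congr (_ + _).
by apply: eq_bigr => j _; rewrite addSn addnS.
Qed.

Lemma qcomb22 : comb_zero (qcomb 22).
Proof. by vm_compute. Qed.

Lemma qcomb_zero t : (22 <= t)%N -> comb_zero (qcomb t).
Proof.
elim: t => [|t IH] // t_ge; have [gt_t|->] : (21 < t)%N \/ t = 21%N by lia.
  apply: comb_zero_merge; apply/allP=> p; rewrite mem_cat => /orP[].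
    exact: (allP (comb_zero_step (IH gt_t))).
  by rewrite inE => /eqP-> /=; rewrite nth_default.
exact: qcomb22.
Qed.

Lemma rect_tilings_012 : [/\ rect_tilings 0 = 1, rect_tilings 1 = 1 & rect_tilings 2 = 1]%N.
Proof. by vm_compute. Qed.

Lemma qcomb_initial : all (fun t => comb_value (qcomb t) 3 + q_half`_t.+1 + q_half`_t.+2
                               + q_half`_t.+3 == p_half`_t.+3) (iota 0 22).
Proof. by vm_compute. Qed.

Lemma big_ord_recr3 (R : nmodType) t (F : nat -> R) :
  \sum_(j < t.+4) F j = \sum_(j < t.+1) F j + F t.+1 + F t.+2 + F t.+3.
Proof. by rewrite !big_ord_recr. Qed.

Lemma rect_tilings_recurrence n :
  \sum_(j < n.+1) q_half`_j * (rect_tilings (n - j))%:Z = p_half`_n.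
Proof.
have [A0 A1 A2] := rect_tilings_012.
case: n => [|[|[|t]]].
- by rewrite big_ord1 A0.
- by rewrite !big_ord_recr big_ord0 /= A0 A1.
- by rewrite !big_ord_recr big_ord0 /= A0 A1 A2.
rewrite (big_ord_recr3 _ (fun j => q_half`_j * (rect_tilings (t.+3 - j))%:Z)).
rewrite -(comb_value_qcomb t (leqnn 3)) subnn.
have -> : (t.+3 - t.+1 = 2)%N by lia.
have -> : (t.+3 - t.+2 = 1)%N by lia.
rewrite A0 A1 A2 !mulr1.
have [lt_t|ge_t] := ltnP t 22.
  by apply/eqP; move/allP: qcomb_initial; apply; rewrite mem_iota.
rewrite comb_value_zero ?qcomb_zero // !nth_default ?addr0 //=; lia.
Qed.

Lemma eq_on_iota (T : eqType) (f g : nat -> T) b :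
  all (fun i => f i == g i) (iota 0 b) -> forall i, (i < b)%N -> f i = g i.
Proof. by move=> /allP fg i lt_i; apply/eqP/fg; rewrite mem_iota. Qed.

Lemma coef_q_poly N : q_poly`_N = if odd N then 0 else q_half`_N./2.
Proof.
rewrite /q_poly !coefD !coefN !coefZ !coefXn !coef1.
have [small|large] := ltnP N 46.
  by move: N small; apply: eq_on_iota; vm_compute.
rewrite -(subnKC large); move: (N - 46)%N => m.
by case: (odd _); rewrite ?nth_default //; vm_compute.
Qed.

Lemma coef_p_poly N : p_poly`_N = if odd N then 0 else p_half`_N./2.
Proof.
have -> : p_poly = 1 - 'X^4 - 'X^6 - 'X^8 *+ 4 + 'X^12 *+ 4 + 'X^14 *+ 3 + 'X^16 *+ 6
    - 'X^20 *+ 6 - 'X^22 *+ 3 - 'X^24 *+ 4 + 'X^28 *+ 4 + 'X^30 + 'X^32 - 'X^36.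
  by rewrite /p_poly; ring.
rewrite !coefD !coefN !coefMn !coefXn !coef1.
have [small|large] := ltnP N 38.
  by move: N small; apply: eq_on_iota; vm_compute.
rewrite -(subnKC large); move: (N - 38)%N => m.
by case: (odd _); rewrite ?nth_default //; vm_compute.
Qed.

Lemma sum_ord_even (R : nmodType) N (F : nat -> R) :
  (forall k, odd k -> F k = 0) -> \sum_(k < N.+1) F k = \sum_(j < N./2.+1) F j.*2.
Proof.
move=> F_odd; elim: N => [|N IH]; first by rewrite !big_ord1.
rewrite big_ord_recr /= IH uphalf_half.
case: (boolP (odd N)) => [odd_N | even_N] /=.
  rewrite add1n [RHS]big_ord_recr /=; congr (_ + F _).
  by rewrite doubleS -[in LHS](odd_double_half N) odd_N.
by rewrite F_odd ?addr0 //= even_N.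
Qed.

Lemma T14_8E N : T14_8 N = if odd N then 0%N else rect_tilings N./2.
Proof. by rewrite /T14_8 num_tilings_8_1_4. Qed.

Theorem mainTheorem7 : forall N : nat,
  \sum_(k < N.+1) q_poly`_k * (T14_8 (N - k))%:Z = p_poly`_N.
Proof.
move=> N; rewrite coef_p_poly (@sum_ord_even _ N (fun k => q_poly`_k * (T14_8 (N - k))%:Z));
  last by move=> k odd_k; rewrite coef_q_poly odd_k mul0r.
have le_N (j : 'I_N./2.+1) : (j.*2 <= N)%N.
  apply: leq_trans (_ : N./2.*2 <= N)%N; first by rewrite leq_double -ltnS ltn_ord.
  by rewrite -[X in (_ <= X)%N](odd_double_half N) leq_addl.
case: (boolP (odd N)) => [odd_N | even_N].
  by apply: big1 => j _; rewrite T14_8E oddB // odd_double odd_N mulr0.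
have half_sub i : ((N - i.*2)./2 = N./2 - i)%N.
  by rewrite -{1}(odd_double_half N) (negbTE even_N) add0n -doubleB doubleK.
rewrite -rect_tilings_recurrence; apply: eq_bigr => j _.
by rewrite coef_q_poly odd_double doubleK T14_8E oddB // odd_double (negbTE even_N) half_sub.
Qed.
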